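(* Consider the hardware trojan detection game specified in the context. Under EUT there exists a fine value $F^v_{\mathrm{EUT}}$, and under PT there exists a fine value $F^v_{\mathrm{PT}}$, such that when $F$ equals that value, at the mixed-strategy Nash equilibrium neither the attacker nor the defender wins. That is, the equilibrium expected utilities of both players are equal to $0$.
   Context: <p><b>Players and strategies.</b> There are two players, an attacker $a$ and a defender $d$. The trojan types are $\mathcal{T}=\{A,B,C,D\}$, with damages $V_A=1$, $V_B=2$, $V_C=4$, $V_D=12$. Every type has the same fine $F$.</p> <p>The attacker's pure strategy set is $\mathcal{S}_a=\mathcal{T}$. The defender's pure strategy set $\mathcal{S}_d=\{AB,AC,AD,BC,BD,CD\}$ consists of the 2-element subsets of $\mathcal{T}$.</p> <p><b>Payoffs.</b> $u_d(s_d,s_a)=F$ if $s_a\in s_d$, and $u_d(s_d,s_a)=-V_{s_a}$ otherwise. The game is zero-sum: $u_a=-u_d$.</p> <p>Mixed strategies are probability vectors $\boldsymbol{p}_d$ on $\mathcal{S}_d$ and $\boldsymbol{p}_a$ on $\mathcal{S}_a$.</p> <p><b>EUT utility.</b> $U_i^{\mathrm{EUT}}(\boldsymbol{p}_d,\boldsymbol{p}_a)=\sum_{s_d,s_a}p_d(s_d)p_a(s_a)u_i(s_d,s_a)$.</p> <p><b>PT utility.</b> Each player $i$ has a parameter $\alpha_i\in(0,1]$ and the weighting function $w_i(p)=\exp(-(-\ln p)^{\alpha_i})$, with $w_i(0)=0$. For player $i$ with opponent $j$, $U_i^{\mathrm{PT}}(\boldsymbol{p}_i,\boldsymbol{p}_j)=\sum_{s_i,s_j}p_i(s_i)\,w_i(p_j(s_j))\,u_i(s_i,s_j)$.</p>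 <p><b>MSNE.</b> A mixed-strategy Nash equilibrium is a profile from which neither player can increase its utility ($U^{\mathrm{EUT}}$ or $U^{\mathrm{PT}}$, respectively) by unilateral deviation.</p> <p><b>Winning.</b> A player ''wins'' if its equilibrium expected utility is positive.</p> *)

From HB Require Import structures.
From mathcomp Require Import all_boot all_order all_algebra.
From mathcomp Require Import all_classical all_reals all_analysis.
Set Implicit Arguments. Unset Strict Implicit. Unset Printing Implicit Defensive.
Import Order.TTheory GRing.Theory Num.Theory.
Local Open Scope ring_scope.

(* Trojan types A,B,C,D are the ordinals 0,1,2,3 of 'I_4. *)
Definition Trojan := 'I_4.

Definition dmg {R : realType} (t : Trojan) : R :=
  [:: 1; 2; 4; 12]`_(nat_of_ord t).

Definition DefStrat := {A : {set Trojan} | #|A| == 2%N}.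

Definition u_d {R : realType} (F : R) (sd : DefStrat) (sa : Trojan) : R :=
  if sa \in val sd then F else - dmg sa.
Definition u_a {R : realType} (F : R) (sd : DefStrat) (sa : Trojan) : R :=
  - u_d F sd sa.

Definition is_mixed {R : realType} (T : finType) (p : T -> R) : Prop :=
  (forall x, 0 <= p x) /\ \sum_(x : T) p x = 1.

Definition UEUT_d {R : realType} (F : R) (pd : DefStrat -> R) (pa : Trojan -> R) : R :=
  \sum_(sd : DefStrat) \sum_(sa : Trojan) pd sd * pa sa * u_d F sd sa.
Definition UEUT_a {R : realType} (F : R) (pd : DefStrat -> R) (pa : Trojan -> R) : R :=
  \sum_(sd : DefStrat) \sum_(sa : Trojan) pd sd * pa sa * u_a F sd sa.

Definition wPT {R : realType} (alpha p : R) : R :=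
  if p == 0 then 0 else expR (- ((- ln p) `^ alpha)).

Definition UPT_d {R : realType} (alpha_d F : R) (pd : DefStrat -> R) (pa : Trojan -> R) : R :=
  \sum_(sd : DefStrat) \sum_(sa : Trojan) pd sd * wPT alpha_d (pa sa) * u_d F sd sa.
Definition UPT_a {R : realType} (alpha_a F : R) (pd : DefStrat -> R) (pa : Trojan -> R) : R :=
  \sum_(sa : Trojan) \sum_(sd : DefStrat) pa sa * wPT alpha_a (pd sd) * u_a F sd sa.

Definition MSNE {R : realType}
    (Ud Ua : (DefStrat -> R) -> (Trojan -> R) -> R)
    (pd : DefStrat -> R) (pa : Trojan -> R) : Prop :=
  [/\ is_mixed pd, is_mixed pa,
      (forall pd' : DefStrat -> R, is_mixed pd' -> Ud pd' pa <= Ud pd pa) &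
      (forall pa' : Trojan -> R, is_mixed pa' -> Ua pd pa' <= Ua pd pa)].

From HB Require Import structures.
From mathcomp Require Import all_boot all_order all_algebra.
From mathcomp Require Import all_classical all_reals all_analysis.
From mathcomp Require Import ring lra.
Set Implicit Arguments. Unset Strict Implicit. Unset Printing Implicit Defensive.
Import Order.TTheory GRing.Theory Num.Theory.
Import numFieldNormedType.Exports.
Local Open Scope classical_set_scope.
Local Open Scope ring_scope.

(* Both equilibria are built from equalizing strategies.  Put
   c_t = V_t / (F + V_t) and choose F (intermediate value theorem) with
   sum_t c_t = 2, the size of a defender strategy.  Then the attacker mixture
   proportional to 1 / (F + V_t) gives every defender pair payoff 0, and a
   defender mixture over the pairs AD, BC, BD, CD covering each type t with
   probability c_t gives every attack payoff 0; in the zero-sum EUT game this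
   forces the value of every equilibrium to be 0.  Under PT the utility of each
   player is bilinear in its own probabilities and the opponent's weighted
   probabilities, so it suffices to find probability vectors whose Prelec
   weights are proportional to the two equalizers.  These exist because
   p = exp (- (s + c) ^ (1/alpha)) has weight exp (- s - c), and the shift s
   can be tuned, again by the intermediate value theorem, so that the p sum
   to 1. *)

Section PrelecWeight.
Variable R : realType.
Implicit Types a b c s y : R.

Lemma wPT_expR_powRV a y : 0 < a -> 0 <= y -> wPT a (expR (- y `^ a^-1)) = expR (- y).
Proof.
move=> a0 y0; rewrite /wPT gt_eqF ?expR_gt0 // expRK opprK -powRrM mulVf ?gt_eqF //.
by rewrite powRr1.
Qed.

Lemma continuous_expNpowR b y : 0 < y -> {for y, continuous (fun z => expR (- z `^ b))}.
Proof.
move=> y0; apply: continuous_comp; last exact: continuous_expR.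
apply: continuousN; apply: differentiable_continuous; apply/derivable1_diffP.
by apply: derivable_powR; rewrite in_itv /= andbT.
Qed.

Lemma expNpowR_cvg0 b : 0 < b -> expR (- z `^ b) @[z --> 0^'+] --> (1 : R).
Proof.
move=> b0; have <- : expR (- 0) = 1 :> R by rewrite oppr0 expR0.
apply: (cvg_comp (fun z => - z `^ b) expR); last exact: continuous_expR.
by apply: cvgN; exact: powR_cvg0.
Qed.

Lemma continuous_expNpowRD b c s : 0 < s + c ->
  {for s, continuous (fun x => expR (- (x + c) `^ b))}.
Proof.
move=> sc0; apply: (@continuous_comp _ _ _ (fun x => x + c) (fun y => expR (- y `^ b))).
  exact: (cvgD cvg_id (cvg_cst _)).
exact: continuous_expNpowR.
Qed.

Section ShiftedSum.
Variables (T : finType) (P : pred T) (c : T -> R) (b : R).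

Let H s := \sum_(l | P l) expR (- (s + c l) `^ b).

Lemma continuous_sum_expNpowRD s : (forall l, P l -> 0 < s + c l) -> {for s, continuous H}.
Proof.
move=> sc0; apply: (cvg_big add_continuous) => // l Pl.
exact: continuous_expNpowRD (sc0 l Pl).
Qed.

Lemma sum_expNpowRD_cvg0 : 0 < b -> (forall l, P l -> 0 <= c l) -> H x @[x --> 0^'+] --> H 0.
Proof.
move=> b0 c0; apply: (cvg_big add_continuous) => // l Pl; rewrite add0r.
have [cl0|cl_neq0] := eqVneq (c l) 0.
  rewrite cl0 powR0 ?gt_eqF // oppr0 expR0; under eq_cvg do rewrite addr0.
  exact: expNpowR_cvg0.
have cl_gt0 : 0 < 0 + c l by rewrite add0r lt_neqAle eq_sym cl_neq0 c0.
have := @continuous_expNpowRD b (c l) 0 cl_gt0.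
by move=> /cvg_at_right_filter; rewrite /= add0r.
Qed.

Lemma sum_expNpowRD_root i : 0 < b -> P i -> c i = 0 -> (forall l, P l -> 0 <= c l) ->
  exists2 s, 0 <= s & H s = 1.
Proof.
move=> b0 Pi ci0 c0; set n : R := #|T|%:R.
have n_gt0 : 0 < n by rewrite ltr0n; apply/card_gt0P; exists i.
have ln_n_ge0 : 0 <= ln n by rewrite ln_ge0 // ler1n; apply/card_gt0P; exists i.
(* at [s1] every term of [H] is at most [1 / n] *)
set s1 := 1 + ln n `^ b^-1.
have s1_gt0 : 0 < s1 by rewrite ltr_pwDl ?powR_ge0.
have H0 : 1 <= H 0.
  rewrite /H (bigD1 i) //= ci0 addr0 powR0 ?gt_eqF // oppr0 expR0 lerDl.
  by apply: sumr_ge0 => l _; exact: expR_ge0.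
have H1 : H s1 <= 1.
  have -> : 1 = \sum_(l : T) n^-1 by rewrite sumr_const -mulr_natr mulVf ?gt_eqF.
  rewrite /H big_mkcond; apply: ler_sum => l _; case: ifP => Pl; last by rewrite invr_ge0 ltW.
  have -> : n^-1 = expR (- ln n) by rewrite expRN lnK.
  rewrite ler_expR lerN2.
  rewrite -[ln n in X in X <= _](powRr1 ln_n_ge0) -(mulVf (lt0r_neq0 b0)) powRrM.
  have s1_le : ln n `^ b^-1 <= s1 + c l by have := c0 l Pl; rewrite /s1; lra.
  apply: ge0_ler_powR; rewrite ?nnegrE ?powR_ge0 ?(ltW b0) //.
  exact: le_trans (powR_ge0 _ _) s1_le.
have Hcont : {within `[0, s1], continuous H}.
  apply/continuous_within_itvP => //; split.
  - move=> s; rewrite in_itv /= => /andP[s0 _]; apply: continuous_sum_expNpowRD => l Pl.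
    by have := c0 l Pl; lra.
  - exact: sum_expNpowRD_cvg0.
  - apply: cvg_at_left_filter; apply: continuous_sum_expNpowRD => l Pl.
    by have := c0 l Pl; lra.
have H01 : Num.min (H 0) (H s1) <= 1 <= Num.max (H 0) (H s1).
  by rewrite ge_min le_max H0 H1 orbT.
have [s] := IVT (ltW s1_gt0) Hcont H01.
by rewrite in_itv /= => /andP[s0 _] Hs; exists s.
Qed.

End ShiftedSum.

Lemma prelec_weights_proportional a (T : finType) (r : T -> R) :
  0 < a -> (forall l, 0 <= r l) -> (exists l, 0 < r l) ->
  exists2 p : T -> R, is_mixed p & exists2 k : R, 0 < k & forall l, wPT a (p l) = k * r l.
Proof.
move=> a0 r_ge0 [l0 rl0].
have [i _ r_le] := @arg_maxP _ _ T l0 xpredT r isT.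
have ri_gt0 : 0 < r i by apply: lt_le_trans rl0 (r_le _ _).
pose c l := ln (r i) - ln (r l).
have c_ge0 l : 0 < r l -> 0 <= c l.
  by move=> rl; rewrite subr_ge0 ler_ln ?posrE //; exact: r_le.
have b0 : 0 < a^-1 by rewrite invr_gt0.
have [s s0 Hs] := sum_expNpowRD_root b0 ri_gt0 (subrr _) c_ge0.
exists (fun l => if 0 < r l then expR (- (s + c l) `^ a^-1) else 0).
  split; last by rewrite -big_mkcond.
  by move=> l; case: ifP => _ //; exact: expR_ge0.
exists (expR (- s) / r i); first by rewrite divr_gt0 ?expR_gt0.
move=> l; case: ifPn => rl.
  rewrite wPT_expR_powRV ?(addr_ge0 s0 (c_ge0 l rl)) // /c opprD opprB.
  by rewrite !expRD !expRN !lnK ?posrE // mulrA mulrAC.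
have -> : r l = 0 by apply: le_anti; rewrite r_ge0 andbT leNgt.
by rewrite /wPT eqxx mulr0.
Qed.

End PrelecWeight.

Section Bilinear.
Variables (R : comRingType) (S T : finType) (u : S -> T -> R).

Definition bilin (p : S -> R) (q : T -> R) : R := \sum_s \sum_t p s * q t * u s t.

Definition right_null (q : T -> R) : Prop := forall s, \sum_t q t * u s t = 0.
Definition left_null (p : S -> R) : Prop := forall t, \sum_s p s * u s t = 0.

Lemma bilin_right_null p q : right_null q -> bilin p q = 0.
Proof.
move=> uq0; apply: big1 => s _; under eq_bigr do rewrite -mulrA.
by rewrite -mulr_sumr uq0 mulr0.
Qed.

Lemma bilin_left_null p q : left_null p -> bilin p q = 0.
Proof.
move=> pu0; rewrite /bilin exchange_big; apply: big1 => t _.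
under eq_bigr do rewrite mulrAC mulrC.
by rewrite -mulr_sumr pu0 mulr0.
Qed.

Lemma right_nullZ k q q' : (forall t, q' t = k * q t) -> right_null q -> right_null q'.
Proof.
move=> q'E uq0 s; under eq_bigr do rewrite q'E -mulrA.
by rewrite -mulr_sumr uq0 mulr0.
Qed.

Lemma left_nullZ k p p' : (forall s, p' s = k * p s) -> left_null p -> left_null p'.
Proof.
move=> p'E pu0 t; under eq_bigr do rewrite p'E -mulrA.
by rewrite -mulr_sumr pu0 mulr0.
Qed.

End Bilinear.

Lemma sum_indicator_mul (R : ringType) (T : finType) (i : T) (f : T -> R) :
  \sum_j (j == i)%:R * f j = f i.
Proof.
rewrite (bigD1 i) //= eqxx mul1r big1 ?addr0 // => j /negbTE ->.
by rewrite mul0r.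
Qed.

Lemma sum_weighted_indicators (R : ringType) (T : finType) (ws : seq (R * T)) (f : T -> R) :
  \sum_j (\sum_(k <- ws) k.1 * (j == k.2)%:R) * f j = \sum_(k <- ws) k.1 * f k.2.
Proof.
under eq_bigr do rewrite mulr_suml.
rewrite exchange_big; apply: eq_bigr => k _.
by under eq_bigr do rewrite -mulrA; rewrite -mulr_sumr sum_indicator_mul.
Qed.

Lemma is_mixed_exists_gt0 (R : realType) (T : finType) (p : T -> R) :
  is_mixed p -> exists l, 0 < p l.
Proof.
move=> [p_ge0 p_sum]; case: (pickP (fun l => 0 < p l)) => [l pl | no_pos]; first by exists l.
have p0 l : p l = 0 by apply: le_anti; rewrite p_ge0 andbT leNgt no_pos.
by move: p_sum; rewrite big1 // => /esym/eqP; rewrite oner_eq0.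
Qed.

Lemma ler_ratio_addl (R : realFieldType) (F V W : R) :
  0 < F -> 0 <= V -> V <= W -> V / (F + V) <= W / (F + W).
Proof.
move=> F0 V0 VW; have FV0 : 0 < F + V by rewrite ltr_wpDr.
have FW0 : 0 < F + W by rewrite ltr_wpDr // (le_trans V0).
by rewrite ler_pdivrMr // mulrAC ler_pdivlMr //; nra.
Qed.

Lemma ratio_addl_le1 (R : realFieldType) (F V : R) : 0 < F -> 0 <= V -> V / (F + V) <= 1.
Proof. by move=> F0 V0; rewrite ler_pdivrMr ?ltr_wpDr // mul1r lerDr ltW. Qed.

Definition tA : Trojan := @Ordinal 4 0 isT.
Definition tB : Trojan := @Ordinal 4 1 isT.
Definition tC : Trojan := @Ordinal 4 2 isT.
Definition tD : Trojan := @Ordinal 4 3 isT.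

Lemma trojan_ind (P : Trojan -> Prop) : P tA -> P tB -> P tC -> P tD -> forall t, P t.
Proof.
move=> PA PB PC PD [[|[|[|[|n]]]] n_lt4] //.
- by rewrite (_ : Ordinal _ = tA) //; apply: val_inj.
- by rewrite (_ : Ordinal _ = tB) //; apply: val_inj.
- by rewrite (_ : Ordinal _ = tC) //; apply: val_inj.
- by rewrite (_ : Ordinal _ = tD) //; apply: val_inj.
Qed.

Lemma sum_trojan (R : nmodType) (f : Trojan -> R) :
  \sum_t f t = f tA + f tB + f tC + f tD.
Proof.
rewrite /Trojan !big_ord_recl big_ord0 addr0 !addrA.
by congr (_ + _ + _ + _); congr f; apply: val_inj.
Qed.

Lemma card_set2 (i j : Trojan) : i != j -> #|[set i; j]%SET| == 2.
Proof. by rewrite cards2 => ->. Qed.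

Definition pair_strat (i j : Trojan) (ij : i != j) : DefStrat :=
  exist _ [set i; j]%SET (card_set2 ij).

Definition sAD : DefStrat := pair_strat (isT : tA != tD).
Definition sBC : DefStrat := pair_strat (isT : tB != tC).
Definition sBD : DefStrat := pair_strat (isT : tB != tD).
Definition sCD : DefStrat := pair_strat (isT : tC != tD).

Section TrojanGame.
Variable R : realType.
Implicit Types (F : R) (pd y : DefStrat -> R) (pa x : Trojan -> R).

Lemma UEUT_dE F pd pa : UEUT_d F pd pa = bilin (u_d F) pd pa.
Proof. by []. Qed.

Lemma UEUT_aE F pd pa : UEUT_a F pd pa = - UEUT_d F pd pa.
Proof.
rewrite /UEUT_a /UEUT_d -sumrN; apply: eq_bigr => sd _.
by rewrite -sumrN; apply: eq_bigr => t _; rewrite /u_a mulrN.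
Qed.

Lemma UPT_dE ad F pd pa : UPT_d ad F pd pa = bilin (u_d F) pd (fun t => wPT ad (pa t)).
Proof. by []. Qed.

Lemma UPT_aE aa F pd pa :
  UPT_a aa F pd pa = - bilin (u_d F) (fun sd => wPT aa (pd sd)) pa.
Proof.
rewrite /UPT_a /bilin exchange_big -sumrN; apply: eq_bigr => sd _.
by rewrite -sumrN; apply: eq_bigr => t _; rewrite /u_a mulrN [pa t * _]mulrC.
Qed.

Lemma EUT_MSNE_of_null F y x : is_mixed y -> is_mixed x ->
  left_null (u_d F) y -> right_null (u_d F) x -> MSNE (UEUT_d F) (UEUT_a F) y x.
Proof.
move=> y_mixed x_mixed y_null x_null; split=> // [pd' _|pa' _].
  by rewrite !UEUT_dE !(bilin_right_null _ x_null).
by rewrite !UEUT_aE !UEUT_dE !(bilin_left_null _ y_null).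
Qed.

Lemma EUT_MSNE_value F y x pd pa : is_mixed y -> is_mixed x ->
  left_null (u_d F) y -> right_null (u_d F) x -> MSNE (UEUT_d F) (UEUT_a F) pd pa ->
  UEUT_d F pd pa = 0 /\ UEUT_a F pd pa = 0.
Proof.
move=> y_mixed x_mixed y_null x_null [_ _ best_d best_a].
have Ud_ge0 : 0 <= UEUT_d F pd pa.
  by have := best_d y y_mixed; rewrite UEUT_dE (bilin_left_null _ y_null).
have Ud_le0 : UEUT_d F pd pa <= 0.
  have := best_a x x_mixed.
  by rewrite !UEUT_aE lerN2 [UEUT_d F pd x]UEUT_dE (bilin_right_null _ x_null).
have Ud0 : UEUT_d F pd pa = 0 by apply: le_anti; rewrite Ud_le0.
by rewrite UEUT_aE Ud0 oppr0.
Qed.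

Lemma PT_MSNE_of_null ad aa F pd pa : is_mixed pd -> is_mixed pa ->
  right_null (u_d F) (fun t => wPT ad (pa t)) -> left_null (u_d F) (fun sd => wPT aa (pd sd)) ->
  [/\ MSNE (UPT_d ad F) (UPT_a aa F) pd pa, UPT_d ad F pd pa = 0 & UPT_a aa F pd pa = 0].
Proof.
move=> pd_mixed pa_mixed wpa_null wpd_null.
have Ud0 pd' : UPT_d ad F pd' pa = 0 by rewrite UPT_dE (bilin_right_null _ wpa_null).
have Ua0 pa' : UPT_a aa F pd pa' = 0 by rewrite UPT_aE (bilin_left_null _ wpd_null) oppr0.
by split=> //; split=> // [pd' _|pa' _]; rewrite ?Ud0 ?Ua0.
Qed.

Lemma dmg_gt0 t : 0 < dmg t :> R.
Proof. by elim/trojan_ind: t; rewrite /dmg /=; lra. Qed.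

Lemma card_strat (sd : DefStrat) : \sum_t (t \in val sd)%:R = 2 :> R.
Proof.
have -> : \sum_t (t \in val sd)%:R = #|val sd|%:R :> R.
  by rewrite -natr_sum -sum1_card; congr (_%:R); rewrite [RHS]big_mkcond.
by rewrite (eqP (valP sd)).
Qed.

Lemma u_dE F sd t : u_d F sd t = (t \in val sd)%:R * (F + dmg t) - dmg t.
Proof. by rewrite /u_d; case: (t \in val sd); rewrite ?mul1r ?mul0r ?addrK ?sub0r. Qed.

Lemma right_null_inv_fine F : (forall t, F + dmg t != 0) ->
  \sum_t dmg t / (F + dmg t) = 2 -> right_null (u_d F) (fun t => (F + dmg t)^-1).
Proof.
move=> Fd0 balanced sd; under eq_bigr => t _.
  rewrite u_dE mulrBr mulrCA mulVf // mulr1 mulrC; over.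
by rewrite sumrB card_strat balanced subrr.
Qed.

Definition coverage y t : R := \sum_sd y sd * (t \in val sd)%:R.

Lemma left_null_coverage F y : \sum_sd y sd = 1 ->
  (forall t, coverage y t * (F + dmg t) = dmg t) -> left_null (u_d F) y.
Proof.
move=> y1 cov t; under eq_bigr do rewrite u_dE mulrBr mulrA.
by rewrite sumrB -mulr_suml -/(coverage y t) cov -mulr_suml y1 mul1r subrr.
Qed.

Lemma pair_coverage (c : Trojan -> R) :
  0 <= c tA <= c tB -> c tB <= c tC <= c tD -> c tD <= 1 -> \sum_t c t = 2 ->
  exists2 y, is_mixed y & forall t, coverage y t = c t.
Proof.
move=> /andP[cA0 cAB] /andP[cBC cCD] cD1; rewrite sum_trojan => c_sum.
(* the weights solve the coverage equations; monotonicity of c makes them nonnegative *)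
pose w1 := c tA; pose w2 := 1 - c tD.
pose w3 := (c tB + c tD - c tA - c tC) / 2; pose w4 := (c tC + c tD - c tA - c tB) / 2.
pose y sd := \sum_(k <- [:: (w1, sAD); (w2, sBC); (w3, sBD); (w4, sCD)]) k.1 * (sd == k.2)%:R.
have sum_y f : \sum_sd y sd * f sd = w1 * f sAD + w2 * f sBC + w3 * f sBD + w4 * f sCD.
  by rewrite sum_weighted_indicators !big_cons big_nil addr0 !addrA.
exists y.
  split.
    move=> sd; rewrite /y !big_cons big_nil addr0 /=.
    by rewrite !addr_ge0 ?mulr_ge0 ?ler0n // /w1 /w2 /w3 /w4; lra.
  have := sum_y (fun _ => 1); under eq_bigr do rewrite mulr1.
  by move=> ->; rewrite !mulr1 /w1 /w2 /w3 /w4; lra.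
move=> t; rewrite /coverage sum_y.
by elim/trojan_ind: t; rewrite /= !inE /= /w1 /w2 /w3 /w4; lra.
Qed.

Lemma exists_balanced_fine : exists2 F : R, 0 < F & \sum_t dmg t / (F + dmg t) = 2.
Proof.
pose g (F : R) := \sum_t dmg t / (F + dmg t).
have g_cont : {within `[2, 4], continuous g}.
  apply: continuous_subspace_itv => F; rewrite in_itv /= => /andP[F2 _].
  apply: (cvg_big add_continuous) => // t _.
  have Fd0 : F + dmg t != 0 by rewrite gt_eqF // addr_gt0 ?dmg_gt0 // (lt_le_trans _ F2).
  exact: cvgM (cvg_cst _) (cvgV Fd0 (cvgD cvg_id (cvg_cst _))).
have g_2 : g 2 = 1/3 + 1/2 + 2/3 + 6/7 by rewrite /g sum_trojan /dmg /=; field.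
have g_4 : g 4 = 1/5 + 1/3 + 1/2 + 3/4 by rewrite /g sum_trojan /dmg /=; field.
have g_24 : Num.min (g 2) (g 4) <= 2 <= Num.max (g 2) (g 4).
  by rewrite ge_min le_max g_2 g_4; apply/andP; split; apply/orP; [right|left]; lra.
have two_le_four : 2 <= 4 :> R by lra.
have [F] := IVT two_le_four g_cont g_24.
by rewrite in_itv /= => /andP[F2 _] gF; exists F => //; lra.
Qed.

Lemma exists_attacker_equalizer F : 0 < F -> \sum_t dmg t / (F + dmg t) = 2 ->
  exists2 x, is_mixed x & right_null (u_d F) x.
Proof.
move=> F0 balanced; have Fd_gt0 t : 0 < F + dmg t by rewrite addr_gt0 ?dmg_gt0.
pose Q := \sum_t (F + dmg t)^-1.
have Q_gt0 : 0 < Q by rewrite /Q sum_trojan !addr_gt0 ?invr_gt0.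
exists (fun t => Q^-1 * (F + dmg t)^-1).
  split; first by move=> t; rewrite mulr_ge0 // ltW // invr_gt0.
  by rewrite -mulr_sumr mulVf ?gt_eqF.
apply: (right_nullZ (fun t => erefl)); apply: right_null_inv_fine => // t.
by rewrite gt_eqF.
Qed.

Lemma exists_defender_equalizer F : 0 < F -> \sum_t dmg t / (F + dmg t) = 2 ->
  exists2 y, is_mixed y & left_null (u_d F) y.
Proof.
move=> F0 balanced; pose c t := dmg t / (F + dmg t).
have c_le (t t' : Trojan) : dmg t <= dmg t' :> R -> c t <= c t'.
  by move=> le_tt'; apply: ler_ratio_addl => //; exact: ltW (dmg_gt0 t).
have [y y_mixed y_cov] : exists2 y, is_mixed y & forall t, coverage y t = c t.
  apply: pair_coverage => //; rewrite ?ratio_addl_le1 ?(ltW (dmg_gt0 _)) //.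
  - by rewrite divr_ge0 ?addr_ge0 ?(ltW F0) ?(ltW (dmg_gt0 _)) // c_le // /dmg /=; lra.
  - by rewrite !c_le // /dmg /=; lra.
exists y => //; apply: left_null_coverage => [|t]; first exact: y_mixed.2.
by rewrite y_cov /c mulfVK // gt_eqF // addr_gt0 ?dmg_gt0.
Qed.

End TrojanGame.

Theorem theorem3 (R : realType) :
  (exists F_EUT : R, 0 < F_EUT /\
     (exists pd pa, MSNE (UEUT_d F_EUT) (UEUT_a F_EUT) pd pa) /\
     (forall pd pa, MSNE (UEUT_d F_EUT) (UEUT_a F_EUT) pd pa ->
        UEUT_d F_EUT pd pa = 0 /\ UEUT_a F_EUT pd pa = 0))
  /\
  (forall alpha_d alpha_a : R,
     0 < alpha_d <= 1 -> 0 < alpha_a <= 1 ->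
     exists F_PT : R, 0 < F_PT /\
       exists pd pa, MSNE (UPT_d alpha_d F_PT) (UPT_a alpha_a F_PT) pd pa /\
         UPT_d alpha_d F_PT pd pa = 0 /\ UPT_a alpha_a F_PT pd pa = 0).
Proof.
have [F F0 balanced] := exists_balanced_fine R.
have [x x_mixed x_null] := exists_attacker_equalizer F0 balanced.
have [y y_mixed y_null] := exists_defender_equalizer F0 balanced.
split.
  exists F; split=> //; split; first by exists y, x; exact: EUT_MSNE_of_null.
  by move=> pd pa; exact: EUT_MSNE_value y_mixed x_mixed y_null x_null.
move=> ad aa /andP[ad0 _] /andP[aa0 _].
have Fd_gt0 t : 0 < F + dmg t by rewrite addr_gt0 ?dmg_gt0.
have inv_gt0 t : 0 < (F + dmg t)^-1 by rewrite invr_gt0.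
have inv_null := right_null_inv_fine (fun t => lt0r_neq0 (Fd_gt0 t)) balanced.
have [pa pa_mixed [k _ wpa]] :=
  prelec_weights_proportional ad0 (fun t => ltW (inv_gt0 t)) (ex_intro _ tA (inv_gt0 tA)).
have [pd pd_mixed [k' _ wpd]] := prelec_weights_proportional aa0 y_mixed.1 (is_mixed_exists_gt0 y_mixed).
exists F; split=> //; exists pd, pa.
by have [] := PT_MSNE_of_null pd_mixed pa_mixed (right_nullZ wpa inv_null) (left_nullZ wpd y_null).
Qed.
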